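(* In the setting below, assume $\|\nabla f_i(x)\|\le G_i$ for all $x$ and $i$. Then for any $k\in[K]$, any permutation $\sigma_k$ and any $z\in\mathbb R^d$, $$\frac1n\sum_{i=1}^n\Big(B_{f_{\sigma_k^i}}(x_{k+1},x_k^i)-B_{f_{\sigma_k^i}}(z,x_k^i)\Big)\le2\bar G\|x_{k+1}-x_k\|+\bar G^2n\eta_k.$$
   Context: Setting. Let $n,d\in\mathbb N$, let $f_1,\dots,f_n:\mathbb R^d\to\mathbb R$ be convex, let $\psi:\mathbb R^d\to\mathbb R\cup\{+\infty\}$ be proper, closed and convex. For a convex function $g$, $\nabla g(x)$ denotes an element of $\partial g(x)$ (for each $f_i$ a fixed selection of subgradients, the same one used in the algorithm and in the Bregman divergences), and $B_g(x,y)=g(x)-g(y)-\langle\nabla g(y),x-y\rangle$. Proximal shuffling gradient method: given $x_1\in\mathrm{dom}\,\psi$, a number of epochs $K\ge2$ and stepsizes $\eta_k>0$, for $k=1,\dots,K$: choose a permutation $\sigma_k=(\sigma_k^1,\dots,\sigma_k^n)$ of $[n]=\{1,\dots,n\}$; set $x_k^1=x_k$ and $x_k^{i+1}=x_k^i-\eta_k\nabla f_{\sigma_k^i}(x_k^i)$ for $i=1,\dots,n$; set $x_{k+1}=\arg\min_{x\in\mathbb R^d}\{n\psi(x)+\frac{1}{2\eta_k}\|x-x_k^{n+1}\|^2\}$. Lipschitz condition: constants $G_i>0$ with $\|\nabla f_i(x)\|\le G_i$ for all $x\in\mathbb R^d$, $i\in[n]$ (for every subgradient); $\bar G=\frac1n\sum_{i=1}^nG_i$.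 *)

From HB Require Import structures.
From mathcomp Require Import all_boot all_order all_algebra.
From mathcomp Require Import all_classical all_reals all_analysis.
From mathcomp Require Import fingroup perm.
Set Implicit Arguments. Unset Strict Implicit. Unset Printing Implicit Defensive.
Import Order.TTheory GRing.Theory Num.Theory.
Import numFieldNormedType.Exports.
Local Open Scope classical_set_scope.
Local Open Scope ring_scope.

Definition dotv (R : realType) (d : nat) (u v : 'rV[R]_d) : R :=
  \sum_(j < d) u ord0 j * v ord0 j.

Definition enorm (R : realType) (d : nat) (u : 'rV[R]_d) : R :=
  Num.sqrt (dotv u u).

Definition convex_fun (R : realType) (d : nat) (f : 'rV[R]_d -> R) : Prop :=
  forall (x y : 'rV[R]_d) (t : R), 0 <= t -> t <= 1 ->
    f ((1 - t) *: x + t *: y) <= (1 - t) * f x + t * f y.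

Definition is_subgrad (R : realType) (d : nat) (f : 'rV[R]_d -> R)
    (x v : 'rV[R]_d) : Prop :=
  forall y, f x + dotv v (y - x) <= f y.

(* Bregman divergence B_f(x,y) = f x - f y - <grad f y, x - y>,
   with gradf a fixed selection of subgradients. *)
Definition bregman (R : realType) (d : nat) (f : 'rV[R]_d -> R)
    (gradf : 'rV[R]_d -> 'rV[R]_d) (x y : 'rV[R]_d) : R :=
  f x - f y - dotv (gradf y) (x - y).

Definition proper_fun (R : realType) (d : nat) (psi : 'rV[R]_d -> \bar R) : Prop :=
  (forall x, psi x != -oo%E) /\ (exists x, (psi x < +oo)%E).

Definition closed_fun (R : realType) (d : nat) (psi : 'rV[R]_d -> \bar R) : Prop :=
  closed [set p : 'rV[R]_d * R | (psi p.1 <= p.2%:E)%E].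

Definition convex_efun (R : realType) (d : nat) (psi : 'rV[R]_d -> \bar R) : Prop :=
  forall (x y : 'rV[R]_d) (t : R), 0 <= t -> t <= 1 ->
    (psi ((1 - t) *: x + t *: y)%R <= (1 - t)%:E * psi x + t%:E * psi y)%E.

Definition prox_obj (R : realType) (d n : nat) (psi : 'rV[R]_d -> \bar R)
    (eta : R) (w y : 'rV[R]_d) : \bar R :=
  ((n%:R)%:E * psi y + ((2 * eta)^-1 * enorm (y - w) ^+ 2)%:E)%E.

From HB Require Import structures.
From mathcomp Require Import all_boot all_order all_algebra.
From mathcomp Require Import all_classical all_reals all_analysis.
From mathcomp Require Import fingroup perm.
From mathcomp Require Import ring lra.
Import Order.TTheory GRing.Theory Num.Theory.
Local Open Scope ring_scope.
Set Implicit Arguments.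
Unset Strict Implicit.

(* Per component, the Bregman difference is at most the inner product of the
   subgradient increment with [x_{k+1} - x_k^i], hence at most
   [2 G ||x_{k+1} - x_k^i||]. Each inner step moves the iterate by at most
   [eta G_{sigma^j}], so [||x_{k+1} - x_k^i||] is at most
   [||x_{k+1} - x_k|| + eta (G_{sigma^1} + ... + G_{sigma^{i-1}})].
   Summing over i, the cross terms [2 sum_{j<i} G_{sigma^i} G_{sigma^j}] are
   bounded by [(sum_i G_i)^2 = (n Gbar)^2]. *)

Section EuclideanGeometry.
Variables (R : realType) (d : nat).
Implicit Types u v w : 'rV[R]_d.

Lemma dotvC u v : dotv u v = dotv v u.
Proof. by apply: eq_bigr => j _; rewrite mulrC. Qed.

Lemma dotvDl u v w : dotv (u + v) w = dotv u w + dotv v w.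
Proof. by rewrite /dotv -big_split; apply: eq_bigr => j _; rewrite mxE mulrDl. Qed.

Lemma dotvZl c u w : dotv (c *: u) w = c * dotv u w.
Proof. by rewrite /dotv mulr_sumr; apply: eq_bigr => j _; rewrite mxE mulrA. Qed.

Lemma dotvNl u w : dotv (- u) w = - dotv u w.
Proof. by rewrite -scaleN1r dotvZl mulN1r. Qed.

Lemma dotvBl u v w : dotv (u - v) w = dotv u w - dotv v w.
Proof. by rewrite dotvDl dotvNl. Qed.

Lemma dotvDr u v w : dotv w (u + v) = dotv w u + dotv w v.
Proof. by rewrite dotvC dotvDl !(dotvC w). Qed.

Lemma dotvZr c u w : dotv w (c *: u) = c * dotv w u.
Proof. by rewrite dotvC dotvZl dotvC. Qed.

Lemma dotvNr u w : dotv w (- u) = - dotv w u.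
Proof. by rewrite dotvC dotvNl dotvC. Qed.

Lemma dotvBr u v w : dotv w (u - v) = dotv w u - dotv w v.
Proof. by rewrite dotvDr dotvNr. Qed.

Lemma dotvv_ge0 u : 0 <= dotv u u.
Proof. by apply: sumr_ge0 => j _; rewrite -expr2 sqr_ge0. Qed.

Lemma enorm_ge0 u : 0 <= enorm u.
Proof. exact: sqrtr_ge0. Qed.

Lemma enorm_sqr u : enorm u ^+ 2 = dotv u u.
Proof. by rewrite sqr_sqrtr // dotvv_ge0. Qed.

Lemma enorm_eq0_dotv u v : enorm u = 0 -> dotv u v = 0.
Proof.
move=> u0; have uu0 : dotv u u = 0 by rewrite -enorm_sqr u0 expr0n.
rewrite /dotv big1 // => j _.
have /eqP : u ord0 j * u ord0 j = 0.
  apply: (psumr_eq0P (P := xpredT) (F := fun j => u ord0 j * u ord0 j)) => // i _.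
  by rewrite -expr2 sqr_ge0.
by rewrite mulf_eq0 orbb => /eqP ->; rewrite mul0r.
Qed.

Lemma dotv_le_enorm u v : dotv u v <= enorm u * enorm v.
Proof.
have [u0|un0] := eqVneq (enorm u) 0; first by rewrite enorm_eq0_dotv // u0 mul0r.
have [v0|vn0] := eqVneq (enorm v) 0; first by rewrite dotvC enorm_eq0_dotv // v0 mulr0.
have pu : 0 < enorm u by rewrite lt_def un0 enorm_ge0.
have pv : 0 < enorm v by rewrite lt_def vn0 enorm_ge0.
have := dotvv_ge0 (enorm v *: u - enorm u *: v).
rewrite !dotvBl !dotvBr !dotvZl !dotvZr -!enorm_sqr (dotvC v u).
have := mulr_gt0 pu pv; nra.
Qed.

Lemma enormN u : enorm (- u) = enorm u.
Proof. by rewrite /enorm dotvNl dotvNr opprK. Qed.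

Lemma enormB u v : enorm (u - v) = enorm (v - u).
Proof. by rewrite -enormN opprB. Qed.

Lemma enormD u v : enorm (u + v) <= enorm u + enorm v.
Proof.
have : enorm (u + v) ^+ 2 <= (enorm u + enorm v) ^+ 2.
  rewrite enorm_sqr !dotvDl !dotvDr (dotvC v u) sqrrD -!enorm_sqr.
  have := dotv_le_enorm u v; lra.
have := enorm_ge0 (u + v); have := enorm_ge0 u; have := enorm_ge0 v; nra.
Qed.

Lemma enormZ c u : 0 <= c -> enorm (c *: u) = c * enorm u.
Proof.
move=> c_ge0; rewrite /enorm dotvZl dotvZr mulrA sqrtrM; last by nra.
by rewrite -expr2 sqrtr_sqr ger0_norm.
Qed.

Lemma enorm_sub_path (w : nat -> 'rV[R]_d) (c : nat -> R) (X : 'rV[R]_d) p :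
  (forall m, (m < p)%N -> enorm (w m.+1 - w m) <= c m) ->
  forall m, (m <= p)%N -> enorm (X - w m) <= enorm (X - w 0%N) + \sum_(j < m) c j.
Proof.
move=> step; elim=> [|m IH] le_mp; first by rewrite big_ord0 addr0.
rewrite big_ord_recr /= addrA.
have -> : X - w m.+1 = (X - w m) + (w m - w m.+1) by rewrite addrA subrK.
apply: le_trans (enormD _ _) _; rewrite (enormB (w m)).
by apply: lerD; [apply: IH; apply: ltnW | apply: step].
Qed.

End EuclideanGeometry.

Section BregmanDivergence.
Variables (R : realType) (d : nat).
Variables (f : 'rV[R]_d -> R) (gf : 'rV[R]_d -> 'rV[R]_d).
Hypothesis gf_subgrad : forall y, is_subgrad f y (gf y).

Lemma bregman_ge0 x y : 0 <= bregman f gf x y.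
Proof. by rewrite /bregman subr_ge0 lerBrDl; apply: gf_subgrad. Qed.

Lemma bregman_le_dotv x y : bregman f gf x y <= dotv (gf x - gf y) (x - y).
Proof.
have := gf_subgrad x y; rewrite -(opprB x y) dotvNr /bregman dotvBl; lra.
Qed.

Lemma bregman_diff_le (G : R) x y z :
  (forall w, enorm (gf w) <= G) ->
  bregman f gf x y - bregman f gf z y <= 2 * G * enorm (x - y).
Proof.
move=> gf_le; have := bregman_ge0 z y; have := bregman_le_dotv x y.
rewrite dotvBl.
have := dotv_le_enorm (gf x) (x - y); have := dotv_le_enorm (- gf y) (x - y).
rewrite dotvNl enormN.
have := ler_wpM2r (enorm_ge0 (x - y)) (gf_le x).
have := ler_wpM2r (enorm_ge0 (x - y)) (gf_le y).
lra.
Qed.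

End BregmanDivergence.

Lemma sum_mul_partial_sum_le_sqr (R : realDomainType) (a : nat -> R) m :
  2 * \sum_(i < m) (a i * \sum_(j < i) a j) <= (\sum_(i < m) a i) ^+ 2.
Proof.
elim: m => [|m IH]; first by rewrite !big_ord0 mulr0 expr0n.
rewrite !big_ord_recr /= mulrDr sqrrD.
have := sqr_ge0 (a m); nra.
Qed.

Lemma sum_weighted_path_le (R : realDomainType) m (a : nat -> R) (b t : 'I_m -> R) (D e : R) :
  (forall i, 0 <= a i) -> 0 <= e ->
  (forall i : 'I_m, b i <= 2 * a i * t i) ->
  (forall i : 'I_m, t i <= D + e * \sum_(j < i) a j) ->
  \sum_(i < m) b i <= 2 * D * \sum_(i < m) a i + e * (\sum_(i < m) a i) ^+ 2.
Proof.
move=> a_ge0 e_ge0 b_le t_le.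
apply: (le_trans (ler_sum _ (fun i _ => b_le i))).
apply: (@le_trans _ _ (\sum_(i < m) 2 * a i * (D + e * \sum_(j < i) a j))).
  by apply: ler_sum => i _; apply: ler_wpM2l; [rewrite mulr_ge0 | apply: t_le].
have -> : \sum_(i < m) 2 * a i * (D + e * \sum_(j < i) a j)
  = 2 * D * \sum_(i < m) a i + e * (2 * \sum_(i < m) (a i * \sum_(j < i) a j)).
  rewrite !mulr_sumr -big_split /=; apply: eq_bigr => i _; ring.
by rewrite lerD2l ler_wpM2l // sum_mul_partial_sum_le_sqr.
Qed.

Lemma mean_bound_le (R : realFieldType) n (S D e A : R) :
  S <= 2 * D * A + e * A ^+ 2 ->
  n%:R^-1 * S <= 2 * (n%:R^-1 * A) * D + (n%:R^-1 * A) ^+ 2 * n%:R * e.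
Proof.
case: n => [|n] S_le; first by rewrite invr0 !(mul0r, mulr0, expr0n, addr0).
set c : R := n.+1%:R^-1.
have cn : c * n.+1%:R = 1 by rewrite mulVf // pnatr_eq0.
have -> : 2 * (c * A) * D + (c * A) ^+ 2 * n.+1%:R * e
          = c * (2 * D * A + e * A ^+ 2) + c * (e * A ^+ 2) * (c * n.+1%:R - 1) by ring.
by rewrite cn subrr mulr0 addr0 ler_wpM2l // invr_ge0 ler0n.
Qed.

Unset Implicit Arguments.

Theorem mainTheorem8 (R : realType) (n d : nat)
    (f : 'I_n -> 'rV[R]_d -> R) (gf : 'I_n -> 'rV[R]_d -> 'rV[R]_d)
    (psi : 'rV[R]_d -> \bar R) (G : 'I_n -> R)
    (K : nat) (eta : nat -> R) (sigma : nat -> {perm 'I_n})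
    (x : nat -> 'rV[R]_d) (xin : nat -> nat -> 'rV[R]_d) :
  (forall j, convex_fun (f j)) ->
  (forall j y, is_subgrad (f j) y (gf j y)) ->
  proper_fun psi -> closed_fun psi -> convex_efun psi ->
  (forall j, 0 < G j) ->
  (forall j y v, is_subgrad (f j) y v -> enorm v <= G j) ->
  (2 <= K)%N ->
  (forall k, (1 <= k <= K)%N -> 0 < eta k) ->
  (psi (x 1%N) < +oo)%E ->
  (forall k, (1 <= k <= K)%N -> xin k 1%N = x k) ->
  (forall k, (1 <= k <= K)%N -> forall i : 'I_n,
     xin k i.+2 = xin k i.+1 - eta k *: gf (sigma k i) (xin k i.+1)) ->
  (forall k, (1 <= k <= K)%N -> forall y : 'rV[R]_d,
     (prox_obj n psi (eta k) (xin k n.+1) (x k.+1)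
        <= prox_obj n psi (eta k) (xin k n.+1) y)%E) ->
  forall k, (1 <= k <= K)%N -> forall z : 'rV[R]_d,
    let Gbar := (n%:R)^-1 * \sum_(j < n) G j in
    (n%:R)^-1 * \sum_(i < n)
        (bregman (f (sigma k i)) (gf (sigma k i)) (x k.+1) (xin k i.+1)
         - bregman (f (sigma k i)) (gf (sigma k i)) z (xin k i.+1))
      <= 2 * Gbar * enorm (x k.+1 - x k) + Gbar ^+ 2 * n%:R * eta k.
Proof.
case: n f gf psi G sigma => [|n] f gf psi G sigma _ gf_subgrad _ _ _ G_gt0 G_bound _
  eta_gt0 _ xin_start xin_step _ k k_in z; cbv zeta.
  by rewrite !big_ord0 !(mulr0, mul0r, addr0).
(* [a j] is the Lipschitz constant of the (j+1)-th component of epoch k. *)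
set a := fun j : nat => G (sigma k (inord j)).
have a_ord (i : 'I_n.+1) : a i = G (sigma k i) by rewrite /a inord_val.
have eta_ge0 := ltW (eta_gt0 k k_in).
have path_le : forall i : 'I_n.+1, enorm (x k.+1 - xin k i.+1)
    <= enorm (x k.+1 - x k) + eta k * \sum_(j < i) a j.
  move=> i; rewrite -(xin_start k k_in) mulr_sumr.
  apply: (@enorm_sub_path _ _ (fun m => xin k m.+1) (fun j => eta k * a j) _ n.+1)
    (ltnW (ltn_ord i)) => m lt_mn.
  rewrite /= (xin_step k k_in (Ordinal lt_mn)) addrAC subrr add0r.
  rewrite enormN enormZ // ler_wpM2l // (a_ord (Ordinal lt_mn)).
  exact/G_bound/gf_subgrad.
have sumA : \sum_(i < n.+1) a i = \sum_(j < n.+1) G j.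
  rewrite [RHS](reindex_inj (@perm_inj _ (sigma k))).
  by apply: eq_bigr => i _; rewrite a_ord.
have breg_le (i : 'I_n.+1) :
    bregman (f (sigma k i)) (gf (sigma k i)) (x k.+1) (xin k i.+1)
    - bregman (f (sigma k i)) (gf (sigma k i)) z (xin k i.+1)
    <= 2 * a i * enorm (x k.+1 - xin k i.+1).
  rewrite a_ord; apply: (bregman_diff_le (gf_subgrad (sigma k i))) => w.
  exact/G_bound/gf_subgrad.
rewrite -sumA; apply/mean_bound_le.
exact: (sum_weighted_path_le (a := a) (fun j => ltW (G_gt0 _)) eta_ge0 breg_le path_le).
Qed.
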